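(* Let $d$ be a positive integer and $a(z)=\sum_{i\ge0}a_iz^i\in\mathbb{R}[[z]]$ a rational series satisfying (P1), (P2$_d$) and (P3$_d$). Then $$\lim_{z\to1}a(z)(1-z)^d=\lim_{k\to\infty}\frac{(d-1)!}{(d+k-1)!}\frac{\partial^ka}{\partial z^k}(0),$$ the limit on the right existing.
   Context: A rational series is the power series expansion at $z=0$ of a rational function that is regular at $0$; the left-hand limit is taken for the rational function. (P1): the rational function has poles only at roots of unity. (P2$_m$): $z=1$ is a pole of order exactly $m$. (P3$_m$): every pole other than $z=1$ has order less than $m$. *)

From HB Require Import structures.
From mathcomp Require Import all_boot all_order all_algebra.
From mathcomp Require Import all_classical all_reals all_analysis.
From mathcomp Require Import complex.
Set Implicit Arguments. Unset Strict Implicit. Unset Printing Implicit Defensive.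
Import Order.TTheory GRing.Theory Num.Theory.
Local Open Scope ring_scope.

(* A rational function over R is represented by a reduced fraction P/Q
   (coprimep P Q); "regular at 0" means Q.[0] != 0.  Its poles are the complex
   roots of Q (viewed in R[i]), and the order of a pole is the multiplicity of
   that root in Q. *)
Definition polyC_of (R : rcfType) (Q : {poly R}) : {poly R[i]} :=
  map_poly (real_complex R) Q.

(* a : nat -> R is the coefficient sequence of the power series expansion of
   P/Q at 0, i.e.  Q(z) * (sum_k a_k z^k) = P(z)  as formal power series. *)
Definition is_expansion (R : rcfType) (P Q : {poly R}) (a : nat -> R) : Prop :=
  forall k : nat, \sum_(i < k.+1) Q`_i * a (k - i)%N = P`_k.

From HB Require Import structures.
From mathcomp Require Import all_boot all_order all_algebra.
From mathcomp Require Import all_classical all_reals all_analysis.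
From mathcomp Require Import complex.
From mathcomp Require Import ring.
Import Order.TTheory GRing.Theory Num.Theory.
Import numFieldNormedType.Exports.
Local Open Scope classical_set_scope.
Local Open Scope ring_scope.

(* Root counting in R[i] shows that (P1)-(P3) make Q divide
   D = (1 - X) (1 - X^N)^(d-1) for some N > 0, so P/Q = U/D with U = (D/Q) P.
   Writing T = 1 + X + ... + X^(N-1), we have D = T^(d-1) (1 - X)^d and T(1) = N,
   so U = c T^(d-1) + (1 - X) V with c = U(1) / N^(d-1), and
     U/D = c / (1 - X)^d + V / (1 - X^N)^(d-1).
   The first term has coefficients c C(k+d-1, d-1); those of the second are at
   most |V|_1 C(k+d-2, d-2) (the second term is a polynomial when d = 1), which
   is O(1/k) relative to the first.  Hence a_k / C(k+d-1, d-1) tends to c, and so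
   does (1 - x)^d P(x)/Q(x) = U(x)/T(x)^(d-1) as x tends to 1 from the left. *)

Set Implicit Arguments. Unset Strict Implicit. Unset Printing Implicit Defensive.

Lemma dvdp_mup (F : closedFieldType) (q p : {poly F}) :
  q != 0 -> p != 0 -> (forall z, (mup z q <= mup z p)%N) -> q %| p.
Proof.
move: {2}(size q) (leqnn (size q)) => n; elim: n q p => [|n IH] q p.
  by rewrite leqn0 size_poly_eq0 => /eqP ->; rewrite eqxx.
move=> size_q q0 p0 le_mup.
have [/eqP/size_poly1P [c c0 ->]|] := eqVneq (size q) 1%N.
  by rewrite -alg_polyC dvdpZl // dvd1p.
case/closed_rootP => z /factor_theorem [q' def_q].
have Xz0 : 'X - z%:P != 0 by rewrite polyXsubC_eq0.
have q'0 : q' != 0 by apply: contraNneq q0 => q'0; rewrite def_q q'0 mul0r.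
have : (0 < mup z p)%N.
  by apply: leq_trans (le_mup z); rewrite def_q mupM // -[_ - _]expr1 mup_XsubCX eqxx addn1.
rewrite -XsubC_dvd // => /divpK; set p' := p %/ _ => def_p.
have p'0 : p' != 0 by apply: contraNneq p0 => p'0; rewrite -def_p p'0 mul0r.
rewrite def_q -def_p dvdp_mul2r //; apply: IH => // [|w].
  by rewrite -ltnS (leq_trans _ size_q) // def_q size_Mmonic ?monicXsubC // size_XsubC addn2.
by have := le_mup w; rewrite def_q -def_p !mupM // leq_add2r.
Qed.

Lemma common_unity_exponent (R : pzRingType) (s : seq R) :
  {in s, forall z, exists2 n : nat, (0 < n)%N & z ^+ n = 1} ->
  exists2 N : nat, (0 < N)%N & {in s, forall z, z ^+ N = 1}.
Proof.
elim: s => [|x s IH] unity_s; first by exists 1%N.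
have [n n0 xn] := unity_s x (mem_head x s).
have [N N0 sN] : exists2 N : nat, (0 < N)%N & {in s, forall z, z ^+ N = 1}.
  by apply: IH => z zs; apply: unity_s; rewrite in_cons zs orbT.
exists (n * N)%N; first by rewrite muln_gt0 n0.
move=> z; rewrite in_cons => /predU1P [->|zs]; first by rewrite exprM xn expr1n.
by rewrite mulnC exprM sN ?expr1n.
Qed.

Definition unity_denom (R : nzRingType) (N m : nat) : {poly R} :=
  (1 - 'X) * (1 - 'X^N) ^+ m.

Lemma unity_denom_horner0 (R : comNzRingType) (N m : nat) :
  (0 < N)%N -> (unity_denom R N m).[0] = 1.
Proof.
by move=> N0; rewrite /unity_denom !hornerE expr0n eqn0Ngt N0 subr0 expr1n mulr1.
Qed.

Lemma unity_denom_neq0 (R : comNzRingType) (N m : nat) :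
  (0 < N)%N -> unity_denom R N m != 0.
Proof.
move=> N0; apply: contra_eq_neq (unity_denom_horner0 R m N0) => ->.
by rewrite horner0 eq_sym oner_eq0.
Qed.

Lemma map_unity_denom (R S : nzRingType) (f : {rmorphism R -> S}) (N m : nat) :
  map_poly f (unity_denom R N m) = unity_denom S N m.
Proof.
by rewrite /unity_denom rmorphM rmorphXn !rmorphB rmorph1 /= map_polyX map_polyXn.
Qed.

Lemma dvdp_unity_denom (F : closedFieldType) (m : nat) (q : {poly F}) :
  q != 0 ->
  (forall z, root q z -> exists2 n : nat, (0 < n)%N & z ^+ n = 1) ->
  (mup 1 q <= m.+1)%N ->
  (forall z, root q z -> z != 1 -> (mup z q <= m)%N) ->
  exists2 N : nat, (0 < N)%N & q %| unity_denom F N m.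
Proof.
move=> q0 unity_q mup1 mup_z.
have [r def_q] := closed_field_poly_normal q.
have lc0 : lead_coef q != 0 by rewrite lead_coef_eq0.
have root_q z : root q z = (z \in r) by rewrite def_q rootZ // root_prod_XsubC.
have [N N0 rN] : exists2 N : nat, (0 < N)%N & {in r, forall z, z ^+ N = 1}.
  by apply: common_unity_exponent => z; rewrite -root_q; exact: unity_q.
exists N => //; apply: dvdp_mup => // [|z]; first exact: unity_denom_neq0.
have [rz|/mupNroot -> //] := boolP (root q z).
have XzN : 'X - z%:P %| 1 - 'X^N.
  by rewrite dvdp_XsubCl /root !hornerE rN -?root_q // subrr.
rewrite mup_geq ?unity_denom_neq0 // /unity_denom.
have [z1 | z1] := eqVneq z 1.
  rewrite z1 in XzN *; apply: dvdp_trans (dvdp_exp2l _ mup1) _.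
  by rewrite exprS dvdp_mul ?dvdp_exp2r // dvdp_XsubCl /root !hornerE subrr.
by rewrite (dvdp_trans (dvdp_exp2l _ (mup_z z rz z1))) // dvdp_mull // dvdp_exp2r.
Qed.

Section CauchyProduct.
Variable R : comNzRingType.
Implicit Types (u v w : nat -> R) (p q : {poly R}).

Definition cauchy_mul u v : nat -> R :=
  fun k => \sum_(i < k.+1) u i * v (k - i)%N.
Definition coefs p : nat -> R := fun i => p`_i.
Definition cauchy_exp u (j : nat) : nat -> R := iter j (cauchy_mul u) (coefs 1).

Lemma cauchy_mul_coefs p q : cauchy_mul (coefs p) (coefs q) = coefs (p * q).
Proof. by apply/funext => k; rewrite /cauchy_mul /coefs coefM. Qed.

Lemma coefM_le p q q' k :
  (forall i, (i <= k)%N -> q`_i = q'`_i) -> (p * q)`_k = (p * q')`_k.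
Proof. by move=> eq_q; rewrite !coefM; apply: eq_bigr => i _; rewrite eq_q ?leq_subr. Qed.

Lemma cauchy_mul_polyE u v n k : (k < n)%N ->
  cauchy_mul u v k = (\poly_(i < n) u i * \poly_(i < n) v i)`_k.
Proof.
move=> lt_kn; rewrite coefM; apply: eq_bigr => i _.
rewrite !coef_poly (leq_ltn_trans (leq_ord i) lt_kn).
by rewrite (leq_ltn_trans (leq_subr _ _) lt_kn).
Qed.

(* Truncated at degree k, both sides become the k-th coefficient of a product
   of three polynomials. *)
Lemma cauchy_mulA u v w :
  cauchy_mul u (cauchy_mul v w) = cauchy_mul (cauchy_mul u v) w.
Proof.
apply/funext => k; rewrite !(@cauchy_mul_polyE _ _ k.+1) //.
have trunc_mul u' v' : forall i, (i <= k)%N ->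
    (\poly_(i < k.+1) cauchy_mul u' v' i)`_i
    = (\poly_(i < k.+1) u' i * \poly_(i < k.+1) v' i)`_i.
  by move=> i le_ik; rewrite coef_poly ltnS le_ik (@cauchy_mul_polyE _ _ k.+1).
rewrite (coefM_le _ (trunc_mul v w)) mulrA mulrC [in RHS]mulrC.
by rewrite (coefM_le _ (trunc_mul u v)).
Qed.

Lemma cauchy_mul1l v : cauchy_mul (coefs 1) v = v.
Proof.
apply/funext => k; rewrite /cauchy_mul big_ord_recl /coefs coef1 mul1r subn0.
by rewrite big1 ?addr0 // => i _; rewrite coef1 mul0r.
Qed.

Lemma cauchy_mul1r u : cauchy_mul u (coefs 1) = u.
Proof.
apply/funext => k; rewrite /cauchy_mul big_ord_recr /coefs /= subnn coef1 mulr1.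
by rewrite big1 ?add0r // => i _; rewrite coef1 subn_eq0 leqNgt ltn_ord mulr0.
Qed.

Lemma cauchy_mulDr u v w :
  cauchy_mul u (fun k => v k + w k) = fun k => cauchy_mul u v k + cauchy_mul u w k.
Proof.
by apply/funext => k; rewrite /cauchy_mul -big_split; apply: eq_bigr => i _; rewrite mulrDr.
Qed.

Lemma cauchy_mulZr u v c :
  cauchy_mul u (fun k => c * v k) = fun k => c * cauchy_mul u v k.
Proof.
by apply/funext => k; rewrite /cauchy_mul mulr_sumr; apply: eq_bigr => i _; rewrite mulrCA.
Qed.

Lemma cauchy_mul_coefsM_inv p q w u :
  cauchy_mul (coefs p) w = coefs 1 ->
  cauchy_mul (coefs (q * p)) (cauchy_mul w u) = cauchy_mul (coefs q) u.
Proof.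
move=> pw.
by rewrite -cauchy_mul_coefs -cauchy_mulA (cauchy_mulA (coefs p)) pw cauchy_mul1l.
Qed.

Lemma cauchy_exp_inv p u j :
  cauchy_mul (coefs p) u = coefs 1 ->
  cauchy_mul (coefs (p ^+ j)) (cauchy_exp u j) = coefs 1.
Proof.
move=> pu; elim: j => [|j IH]; first by rewrite expr0 cauchy_mul1l.
by rewrite exprSr /cauchy_exp iterS cauchy_mul_coefsM_inv.
Qed.

Lemma cauchy_mul_coefsXn n u k :
  cauchy_mul (coefs 'X^n) u k = if (n <= k)%N then u (k - n)%N else 0.
Proof.
rewrite /cauchy_mul /coefs; under eq_bigr => i _ do rewrite coefXn mulr_natl mulrb.
by rewrite -big_mkcond /= (big_ord1_eq (@GRing.add R) (fun i => u (k - i)%N)) ltnS.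
Qed.

Definition dvd_ind (N : nat) : nat -> R := fun k => (N %| k)%:R.

Lemma cauchy_mul_dvd_ind N :
  (0 < N)%N -> cauchy_mul (coefs (1 - 'X^N)) (dvd_ind N) = coefs 1.
Proof.
move=> N0; apply/funext => k.
have -> : cauchy_mul (coefs (1 - 'X^N)) (dvd_ind N) k
    = cauchy_mul (coefs 1) (dvd_ind N) k - cauchy_mul (coefs 'X^N) (dvd_ind N) k.
  by rewrite /cauchy_mul -sumrB; apply: eq_bigr => i _; rewrite /coefs coefB mulrBl.
rewrite cauchy_mul1l cauchy_mul_coefsXn /dvd_ind /coefs coef1.
case: k => [|k]; first by rewrite leqNgt N0 dvdn0 subr0.
case: leqP => [le_Nk | lt_kN]; first by rewrite dvdn_subl ?dvdnn // subrr.
by rewrite gtnNdvd // subr0.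
Qed.

End CauchyProduct.

Lemma cauchy_mul_inj (R : comUnitRingType) (u : nat -> R) :
  u 0%N \is a GRing.unit -> injective (cauchy_mul u).
Proof.
move=> u0 v w eq_uv; apply/funext => k; elim/ltn_ind: k => k IH.
have := congr1 (fun f => f k) eq_uv; rewrite /cauchy_mul !big_ord_recl subn0.
rewrite (eq_bigr (fun i : 'I_k => u i.+1 * w (k - i.+1)%N)).
  by move/addIr/(mulrI u0).
by move=> i _; rewrite IH // ltn_subrL (leq_ltn_trans (leq0n i) (ltn_ord i)).
Qed.

Lemma sum_bin_hockey m k :
  (\sum_(i < k.+1) 'C(m + (k - i), m) = 'C(m.+1 + k, m.+1))%N.
Proof.
elim: k => [|k IH]; first by rewrite big_ord1 !addn0 !binn.
by rewrite big_ord_recl /= IH subn0 [in RHS]addSn binS addSnnS addnC.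
Qed.

Lemma cauchy_exp_dvd_ind1 (R : comNzRingType) m k :
  cauchy_exp (dvd_ind R 1) m.+1 k = 'C(m + k, m)%:R.
Proof.
elim: m k => [|m IH] k.
  by rewrite /cauchy_exp /= cauchy_mul1r /dvd_ind dvd1n bin0.
rewrite /cauchy_exp iterS -/(cauchy_exp _ m.+1) /cauchy_mul.
under eq_bigr => i _ do rewrite /dvd_ind dvd1n mul1r IH.
by rewrite -natr_sum sum_bin_hockey.
Qed.

Lemma cauchy_exp_dvd_ind_bound (R : numDomainType) N j k :
  0 <= cauchy_exp (dvd_ind R N) j k <= cauchy_exp (dvd_ind R 1) j k.
Proof.
elim: j k => [|j IH] k; first by rewrite lexx andbT /cauchy_exp /= /coefs coef1 ler0n.
rewrite /cauchy_exp !iterS -!/(cauchy_exp _ j) /cauchy_mul; apply/andP; split.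
  apply: sumr_ge0 => i _; apply: mulr_ge0; first by rewrite ler0n.
  by case/andP: (IH (k - i)%N).
apply: ler_sum => i _; have /andP [ge0 le1] := IH (k - i)%N.
by apply: ler_pM => //; rewrite ?ler0n // /dvd_ind dvd1n lern1 leq_b1.
Qed.

Lemma sum_norm_coef_le (R : numDomainType) (V : {poly R}) n :
  \sum_(i < n) `|V`_i| <= \sum_(i < size V) `|V`_i|.
Proof.
case: (leqP n (size V)) => [le_n | /ltnW le_V].
  rewrite (big_ord_widen (size V) (fun i => `|V`_i|) le_n) big_mkcond /=.
  by apply: ler_sum => i _; case: ifP.
rewrite (big_ord_widen n (fun i => `|V`_i|) le_V) [leRHS]big_mkcond /=.
apply: ler_sum => i _; case: ifP => // /negbT; rewrite -leqNgt => le_Vi.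
by rewrite nth_default // normr0.
Qed.

Lemma norm_cauchy_mul_coefs_le (R : numDomainType) (u : nat -> R) (V : {poly R})
    k B :
  (forall i, (i <= k)%N -> `|u i| <= B) ->
  `|cauchy_mul u (coefs V) k| <= B * \sum_(i < size V) `|V`_i|.
Proof.
move=> le_u; have B0 : 0 <= B by apply: le_trans (le_u 0%N _).
apply: le_trans (ler_norm_sum _ _ _) _.
apply: le_trans (_ : \sum_(i < k.+1) B * `|V`_(k - i)| <= _).
  by apply: ler_sum => i _; rewrite normrM ler_wpM2r // le_u // -ltnS.
rewrite -mulr_sumr ler_wpM2l // (reindex_inj rev_ord_inj) /=.
under eq_bigr => i _ do rewrite subSS subKn ?leq_ord //.
exact: sum_norm_coef_le.
Qed.

Definition geom_poly (R : nzRingType) (N : nat) : {poly R} := \sum_(i < N) 'X^i.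

Lemma one_subXn (R : comNzRingType) N : 1 - 'X^N = (1 - 'X) * geom_poly R N.
Proof. by rewrite -opprB subrX1 -mulNr opprB. Qed.

Lemma unity_denomE (R : comNzRingType) N m :
  unity_denom R N m = geom_poly R N ^+ m * (1 - 'X) ^+ m.+1.
Proof. by rewrite /unity_denom one_subXn exprMn mulrA -exprS mulrC. Qed.

Lemma geom_poly_horner1 (R : comNzRingType) N : (geom_poly R N).[1] = N%:R.
Proof.
rewrite /geom_poly horner_sum (eq_bigr (fun=> 1)) ?sumr_const ?card_ord // => i _.
by rewrite hornerXn expr1n.
Qed.

Lemma geom_poly_horner_ge1 (R : numDomainType) N (x : R) :
  (0 < N)%N -> 0 <= x -> 1 <= (geom_poly R N).[x].
Proof.
move=> N0 x0; rewrite /geom_poly horner_sum -(prednK N0) big_ord_recl hornerXn expr0.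
by rewrite lerDl sumr_ge0 // => i _; rewrite hornerXn exprn_ge0.
Qed.

Section UnityDenominator.
Variables (R : numFieldType) (N m : nat).
Hypothesis N_gt0 : (0 < N)%N.
Local Notation D := (unity_denom R N m).
Local Notation T := (geom_poly R N).

Lemma geom_poly_exp_horner1_neq0 : (T ^+ m).[1] != 0.
Proof. by rewrite horner_exp geom_poly_horner1 expf_neq0 // pnatr_eq0 -lt0n. Qed.

(* Splitting off the principal part at the pole 1 of order [m.+1]: the rest
   has denominator [(1 - 'X^N) ^+ m], whose coefficients grow only like k^(m-1). *)
Lemma unity_denom_coefE (U : {poly R}) (a : nat -> R) :
  cauchy_mul (coefs D) a = coefs U ->
  exists V : {poly R}, forall k,
    a k = U.[1] / (T ^+ m).[1] * 'C(m + k, m)%:R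
          + cauchy_mul (cauchy_exp (dvd_ind R N) m) (coefs V) k.
Proof.
move=> a_exp; set c := U.[1] / _.
have : root (U - c *: T ^+ m) 1.
  by rewrite /root hornerD hornerN hornerZ divfK ?geom_poly_exp_horner1_neq0 // subrr.
case/factor_theorem => W def_W; exists (- W).
have def_U : U = c *: T ^+ m + (1 - 'X) * - W.
  by rewrite mulrN -mulNr opprB mulrC -def_W addrC subrK.
have inv_beta :
    cauchy_mul (coefs ((1 - 'X) ^+ m.+1)) (cauchy_exp (dvd_ind R 1) m.+1) = coefs 1.
  by apply: cauchy_exp_inv; rewrite -[X in 1 - X]expr1 cauchy_mul_dvd_ind.
have inv_gamma :
    cauchy_mul (coefs ((1 - 'X^N) ^+ m)) (cauchy_exp (dvd_ind R N) m) = coefs 1.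
  exact/cauchy_exp_inv/cauchy_mul_dvd_ind.
set e := cauchy_mul _ (coefs (- W)).
have -> : a = fun k => c * cauchy_exp (dvd_ind R 1) m.+1 k + e k.
  apply: (@cauchy_mul_inj _ (coefs D)).
    by rewrite /coefs -horner_coef0 unity_denom_horner0 ?unitr1.
  rewrite a_exp cauchy_mulDr cauchy_mulZr -[cauchy_exp _ m.+1]cauchy_mul1r.
  rewrite unity_denomE cauchy_mul_coefsM_inv // cauchy_mul1r -unity_denomE.
  rewrite /e cauchy_mul_coefsM_inv //.
  by rewrite cauchy_mul_coefs def_U; apply/funext => k; rewrite /coefs coefD coefZ.
by move=> k; rewrite cauchy_exp_dvd_ind1.
Qed.

End UnityDenominator.

Lemma cvg_harmonic_dominated (R : realType) (s : nat -> R) (c B : R) :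
  (forall k, `|s k - c| <= B * k.+1%:R^-1) -> s @ \oo --> c.
Proof.
move=> le_s.
have B_harmonic : (fun k => B * harmonic k) @ \oo --> (0 : R).
  by rewrite -(mulr0 B); apply: cvgM; [exact: cvg_cst | exact: cvg_harmonic].
apply: (@squeeze_cvgr _ _ _ _
  (fun k => c - B * harmonic k) (fun k => c + B * harmonic k)).
- by apply: nearW => k; have := le_s k; rewrite distrC ler_distlC.
- by rewrite -[X in _ --> X](subr0 c); apply: cvgB => //; exact: cvg_cst.
- by rewrite -[X in _ --> X](addr0 c); apply: cvgD => //; exact: cvg_cst.
Qed.

Lemma coef_ratio_cvg (R : realType) m N (V : {poly R}) (c : R) (a : nat -> R) :
  (forall k, a k = c * 'C(m + k, m)%:R
                   + cauchy_mul (cauchy_exp (dvd_ind R N) m) (coefs V) k) ->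
  a k / 'C(m + k, m)%:R @[k --> \oo] --> c.
Proof.
case: m => [|m] def_a.
  apply: cvg_near_cst; near=> k.
  have le_Vk : (size V <= k)%N by near: k; exact: nbhs_infty_ge.
  rewrite def_a /cauchy_exp /= cauchy_mul1l /coefs nth_default //.
  by rewrite bin0 divr1 mulr1 addr0.
set n1 : R := \sum_(i < size V) `|V`_i|.
apply: (@cvg_harmonic_dominated _ _ _ (m.+1%:R * n1)) => k.
have C0 : (0 : R) < 'C(m.+1 + k, m.+1)%:R by rewrite ltr0n bin_gt0 leq_addr.
rewrite def_a mulrDl mulfK ?gt_eqF // addrC addKr normrM normfV (gtr0_norm C0).
rewrite ler_pdivrMr // mulrAC ler_pdivlMr ?ltr0n //.
apply: le_trans (_ : 'C(m + k, m)%:R * n1 * k.+1%:R <= _).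
  rewrite ler_pM2r ?ltr0n //; apply: norm_cauchy_mul_coefs_le => i le_ik.
  have /andP [ge0 le1] := cauchy_exp_dvd_ind_bound R N m.+1 i.
  rewrite ger0_norm // (le_trans le1) // !cauchy_exp_dvd_ind1 ler_nat.
  by rewrite leq_bin2l // leq_add2l.
rewrite mulrAC [leRHS]mulrAC ler_wpM2r ?sumr_ge0 // -!natrM ler_nat.
by rewrite -mul_bin_diag addSn /= mulnC leq_mul2r ltnS leq_addl orbT.
Unshelve. all: by end_near.
Qed.

Lemma fact_ratio_binE (R : numFieldType) m k (x : R) :
  m`!%:R / (m + k)`!%:R * (k`!%:R * x) = x / 'C(m + k, m)%:R.
Proof.
have := bin_fact (leq_addr k m); rewrite addKn => <-.
have fact_neq0 n : n`!%:R != 0 :> R by rewrite pnatr_eq0 -lt0n fact_gt0.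
have bin_neq0 : 'C(m + k, m)%:R != 0 :> R by rewrite pnatr_eq0 -lt0n bin_gt0 leq_addr.
by rewrite !natrM; field; rewrite bin_neq0 !fact_neq0.
Qed.

Lemma cvg_at_left_horner_ratio (R : realType) (F : R -> R) (U V : {poly R}) :
  V.[1] != 0 -> (forall x, 0 < x -> x < 1 -> F x = U.[x] / V.[x]) ->
  F x @[x --> (1 : R)^'-] --> U.[1] / V.[1].
Proof.
move=> V1 eq_F.
have UV_cont : U.[x] / V.[x] @[x --> (1 : R)] --> U.[1] / V.[1].
  by apply: cvgM; [|apply: cvgV => //]; exact: continuous_horner.
apply: cvg_trans (cvg_at_left_filter UV_cont).
by apply: near_eq_cvg; near=> x; rewrite eq_F.
Unshelve. all: by end_near.
Qed.

Lemma unity_denom_left_cvg (R : realType) N m (P Q S : {poly R}) :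
  (0 < N)%N -> S * Q = unity_denom R N m ->
  P.[x] / Q.[x] * (1 - x) ^+ m.+1 @[x --> (1 : R)^'-]
    --> (S * P).[1] / (geom_poly R N ^+ m).[1].
Proof.
move=> N0 SQ; apply: cvg_at_left_horner_ratio => [|x x0 x1].
  exact: geom_poly_exp_horner1_neq0.
have T_neq0 : (geom_poly R N).[x] != 0.
  by rewrite gt_eqF // (lt_le_trans ltr01) // geom_poly_horner_ge1 // ltW.
have SQx : S.[x] * Q.[x] = (geom_poly R N).[x] ^+ m * (1 - x) ^+ m.+1.
  by rewrite -hornerM SQ unity_denomE hornerM !horner_exp !hornerE.
have x1_neq0 : 1 - x != 0 by rewrite subr_eq0 eq_sym lt_eqF.
have [Sx_neq0 Qx_neq0] : S.[x] != 0 /\ Q.[x] != 0.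
  by apply/andP; rewrite -negb_or -mulf_eq0 SQx mulf_neq0 ?expf_neq0.
have -> : (geom_poly R N ^+ m).[x] = S.[x] * Q.[x] / (1 - x) ^+ m.+1.
  by rewrite horner_exp SQx mulfK ?expf_neq0.
by rewrite hornerM; field; rewrite expf_neq0 ?Sx_neq0 ?Qx_neq0.
Qed.

Unset Implicit Arguments.

Theorem lemma4p3 (R : realType) (d : nat) (P Q : {poly R}) (a : nat -> R) :
  (0 < d)%N ->
  coprimep P Q -> Q.[0] != 0 -> is_expansion P Q a ->
  (* (P1): poles only at roots of unity *)
  (forall z : R[i], root (polyC_of Q) z -> exists2 n : nat, (0 < n)%N & z ^+ n = 1) ->
  (* (P2_d): z = 1 is a pole of order exactly d *)
  mup (1 : R[i]) (polyC_of Q) = d ->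
  (* (P3_d): every other pole has order < d *)
  (forall z : R[i], root (polyC_of Q) z -> z != 1 -> (mup z (polyC_of Q) < d)%N) ->
  exists L : R,
    (P.[x] / Q.[x] * (1 - x) ^+ d @[x --> (1 : R)^'-] --> L) /\
    ((d.-1)`!%:R / ((d + k).-1)`!%:R * (k`!%:R * a k) @[k --> \oo] --> L).
Proof.
case: d => [//|m] _ _ Q0 a_exp P1 P2 P3.
have Q_neq0 : Q != 0 by apply: contraNneq Q0 => ->; rewrite horner0.
have [N N0 QD] : exists2 N : nat, (0 < N)%N & Q %| unity_denom R N m.
  have [|N N0] := @dvdp_unity_denom _ m (polyC_of Q) _ P1 (eq_leq P2) P3.
    by rewrite map_poly_eq0.
  by rewrite -(map_unity_denom (real_complex R)) dvdp_map; exists N.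
set S := unity_denom R N m %/ Q.
have SQ : S * Q = unity_denom R N m := divpK QD.
have SP_exp : cauchy_mul (coefs (unity_denom R N m)) a = coefs (S * P).
  rewrite -SQ -cauchy_mul_coefs -cauchy_mulA -cauchy_mul_coefs; congr cauchy_mul.
  by apply/funext => k; exact: a_exp.
have [V def_a] := unity_denom_coefE N0 SP_exp.
exists ((S * P).[1] / (geom_poly R N ^+ m).[1]); split.
  exact: unity_denom_left_cvg.
under eq_fun => k do rewrite addSn /= fact_ratio_binE.
exact: coef_ratio_cvg def_a.
Qed.
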